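(* In a network satisfying (H1) and (H2) containing the two connected components $Y+S_0\rightleftarrows U_1\to\cdots\rightleftarrows U_L\to Y+S_L$ and $\widetilde Y+S_L\rightleftarrows V_L\to\widetilde Y+S_{L-1}\rightleftarrows\cdots\rightleftarrows V_1\to\widetilde Y+S_0$ ($L\ge1$), with rate constants as in the context and $\tilde K_j:=\tilde b_j+\tilde c_j$, the constants $\tilde a_L,\tilde b_L,\tilde c_L$ and, for $1\le j\le L-1$, the quantities $\tilde a_j$ and $\tilde K_j$ are identifiable from $s_L$ using $\dot s_L$ and $\ddot s_L$.
   Context: Species are capital letters, concentrations lower-case letters. Mass-action system: $\dot{\mathbf{x}}=\sum_{y\to y'}k_{yy'}\mathbf{x}^y(y'-y)$, rates $k_{yy'}>0$ (vector $\mathbf{k}$). Total derivative: $\dot\varphi=\sum_i\frac{\partial\varphi}{\partial x_i}\dot x_i$ with $\dot x_i$ replaced by the right-hand side; $\varphi^{(\ell)}$ its $\ell$-th iterate. A map $\psi$ of $\mathbf{k}$ is identifiable from $x$ using orders $1\le\ell\le D$ if for positive $\mathbf{k}^*,\mathbf{k}^{**}$, $x^{(\ell)}(\mathbf{x},\mathbf{k}^* )=x^{(\ell)}(\mathbf{x},\mathbf{k}^{**})$ as polynomials in $\mathbf{x}$ for all $1\le\ell\le D$ implies $\psi(\mathbf{k}^* )=\psi(\mathbf{k}^{**})$. (H1) Every connected component has the form $Y+S_0\rightleftarrows U_1\to\cdots\rightleftarrows U_L\to Y+S_L$ (reactions $Y+S_{j-1}\to U_j$, $U_j\to Y+S_{j-1}$,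 $U_j\to Y+S_j$), unique enzyme; intermediates distinct throughout the network; non-intermediates of a component pairwise distinct but may appear in other components; each complex in a unique component. $\mathscr{S}_U$ = substrates/products of the component of intermediate $U$. (H2) A partition $\mathscr{S}^{(0)}\sqcup\cdots\sqcup\mathscr{S}^{(M)}$ ($M\ge2$, nonempty, $\mathscr{S}^{(0)}$ the intermediates) with: for each intermediate $U$ with enzyme $Y$, some $\alpha\ge1$ has $\mathscr{S}_U\subseteq\mathscr{S}^{(\alpha)}$, $Y\notin\mathscr{S}^{(\alpha)}$. Rates: first component $Y+S_{j-1}\to U_j$: $a_j$; $U_j\to Y+S_{j-1}$: $b_j$; $U_j\to Y+S_j$: $c_j$. Second component: $\widetilde Y+S_j\to V_j$: $\tilde a_j$; $V_j\to\widetilde Y+S_j$: $\tilde b_j$; $V_j\to\widetilde Y+S_{j-1}$: $\tilde c_j$ ($1\le j\le L$). *)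

From HB Require Import structures.
From mathcomp Require Import all_boot all_order all_algebra.
Set Implicit Arguments. Unset Strict Implicit. Unset Printing Implicit Defensive.
Import Order.TTheory GRing.Theory Num.Theory.
Local Open Scope ring_scope.

(* A monomial x^y is its exponent vector y : S -> nat (also used for complexes). *)
Definition mono (S : finType) := {ffun S -> nat}.

(* A polynomial is a finite list of terms (coefficient, monomial);
   repeated monomials are allowed, coefficients are summed. *)
Definition mpoly (R : nzRingType) (S : finType) := seq (R * mono S).

Definition mcoef (R : nzRingType) (S : finType) (p : mpoly R S) (m : mono S) : R :=
  \sum_(t <- p | t.2 == m) t.1.

Definition mpoly_eq (R : nzRingType) (S : finType) (p q : mpoly R S) : Prop :=
  forall m : mono S, mcoef p m = mcoef q m.

Definition mvar (R : nzRingType) (S : finType) (s : S) : mpoly R S :=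
  [:: (1, [ffun z => nat_of_bool (z == s)] : mono S)].

Definition mmul (R : nzRingType) (S : finType) (p q : mpoly R S) : mpoly R S :=
  [seq (t.1 * u.1, [ffun z => (t.2 z + u.2 z)%N] : mono S) | t : R * mono S <- p, u : R * mono S <- q].

Definition mderiv (R : nzRingType) (S : finType) (i : S) (p : mpoly R S) : mpoly R S :=
  [seq (t.1 * (t.2 i)%:R, [ffun z => if z == i then (t.2 z).-1 else t.2 z] : mono S) | t : R * mono S <- p].

Definition tdot (R : nzRingType) (S : finType) (f : S -> mpoly R S) (p : mpoly R S)
  : mpoly R S :=
  flatten [seq mmul (mderiv i p) (f i) | i <- enum S].

Definition iter_dot (R : nzRingType) (S : finType) (f : S -> mpoly R S) (l : nat) (s : S)
  : mpoly R S := iter l (tdot f) (mvar R s).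

(* Mass-action right-hand side: reactions are (rate, reactant y, product y'),
   x_s' = sum k x^y (y'_s - y_s). *)
Definition mass_action (R : nzRingType) (S : finType) (rxns : seq (R * mono S * mono S))
  (s : S) : mpoly R S :=
  [seq (r.1.1 * ((r.2 s)%:R - (r.1.2 s)%:R), r.1.2) | r : R * mono S * mono S <- rxns].

Record rcomp (S : finType) := Comp {
  cL : nat;
  cY : S;
  cS : nat -> S;     (* substrates/products S_0 .. S_L *)
  cU : nat -> S      (* intermediates U_1 .. U_L *)
}.

Definition cplxYS (S : finType) (Y s : S) : mono S :=
  [ffun z => (nat_of_bool (z == Y) + nat_of_bool (z == s))%N].
Definition cplx1 (S : finType) (U : S) : mono S := [ffun z => nat_of_bool (z == U)].

(* Rate vector k: for component c and 1 <= j <= L_c,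
   ka c j : Y+S_{j-1} -> U_j,  kb c j : U_j -> Y+S_{j-1},  kc c j : U_j -> Y+S_j. *)
Definition rates (R : Type) (n : nat) :=
  (('I_n -> nat -> R) * ('I_n -> nat -> R) * ('I_n -> nat -> R))%type.

Definition network_reactions (R : nzRingType) (S : finType) (n : nat)
  (comps : 'I_n -> rcomp S) (k : rates R n) : seq (R * mono S * mono S) :=
  let: (ka, kb, kc) := k in
  flatten [seq
    flatten [seq
      [:: (ka c j, cplxYS (cY (comps c)) (cS (comps c) j.-1), cplx1 (cU (comps c) j));
          (kb c j, cplx1 (cU (comps c) j), cplxYS (cY (comps c)) (cS (comps c) j.-1));
          (kc c j, cplx1 (cU (comps c) j), cplxYS (cY (comps c)) (cS (comps c) j))]
      | j <- iota 1 (cL (comps c))]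
    | c <- enum 'I_n].

Definition rhs (R : nzRingType) (S : finType) (n : nat) (comps : 'I_n -> rcomp S)
  (k : rates R n) : S -> mpoly R S :=
  mass_action (network_reactions comps k).

Definition positive_rates (R : numDomainType) (S : finType) (n : nat)
  (comps : 'I_n -> rcomp S) (k : rates R n) : Prop :=
  let: (ka, kb, kc) := k in
  forall c j, (1 <= j <= cL (comps c))%N -> 0 < ka c j /\ 0 < kb c j /\ 0 < kc c j.

Definition is_intermediate (S : finType) (n : nat) (comps : 'I_n -> rcomp S) (s : S) : Prop :=
  exists c j, (1 <= j <= cL (comps c))%N /\ s = cU (comps c) j.

Definition species_cover (S : finType) (n : nat) (comps : 'I_n -> rcomp S) : Prop :=
  forall s : S, exists c : 'I_n,
    s = cY (comps c) \/ (exists i, (i <= cL (comps c))%N /\ s = cS (comps c) i)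
    \/ (exists j, (1 <= j <= cL (comps c))%N /\ s = cU (comps c) j).

Definition H1 (S : finType) (n : nat) (comps : 'I_n -> rcomp S) : Prop :=
  (forall c, (0 < cL (comps c))%N) /\
  (forall c j c' j', (1 <= j <= cL (comps c))%N -> (1 <= j' <= cL (comps c'))%N ->
     cU (comps c) j = cU (comps c') j' -> c = c' /\ j = j') /\
  (forall c j c', (1 <= j <= cL (comps c))%N ->
     cU (comps c) j <> cY (comps c') /\
     (forall i, (i <= cL (comps c'))%N -> cU (comps c) j <> cS (comps c') i)) /\
  (forall c, (forall i, (i <= cL (comps c))%N -> cY (comps c) <> cS (comps c) i) /\
     (forall i i', (i <= cL (comps c))%N -> (i' <= cL (comps c))%N ->
        cS (comps c) i = cS (comps c) i' -> i = i')) /\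
  (forall c c' i i', c <> c' -> (i <= cL (comps c))%N -> (i' <= cL (comps c'))%N ->
     cplxYS (cY (comps c)) (cS (comps c) i) <> cplxYS (cY (comps c')) (cS (comps c') i')).

(* (H2): partition S^(0) |_| ... |_| S^(M) given by a class function cls *)
Definition H2 (S : finType) (n : nat) (comps : 'I_n -> rcomp S) : Prop :=
  exists (M : nat) (cls : S -> nat),
    (2 <= M)%N /\
    (forall s, (cls s <= M)%N) /\
    (forall a, (a <= M)%N -> exists s, cls s = a) /\
    (forall s, cls s = 0%N <-> is_intermediate comps s) /\
    (forall c j, (1 <= j <= cL (comps c))%N ->
       exists a, (1 <= a)%N /\
         (forall i, (i <= cL (comps c))%N -> cls (cS (comps c) i) = a) /\
         cls (cY (comps c)) <> a).

Definition identifiable (R : numDomainType) (S : finType) (n : nat)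
  (comps : 'I_n -> rcomp S) (s : S) (D : nat) (T : Type) (psi : rates R n -> T) : Prop :=
  forall k1 k2 : rates R n,
    positive_rates comps k1 -> positive_rates comps k2 ->
    (forall l, (1 <= l <= D)%N ->
       mpoly_eq (iter_dot (rhs comps k1) l s) (iter_dot (rhs comps k2) l s)) ->
    psi k1 = psi k2.

(* For the second component (V_j = cU c2 (L+1-j)):
   tilde a_j = ka c2 (L+1-j), etc.  psi = (a~_L, b~_L, c~_L, [(a~_j, K~_j) | 1<=j<=L-1]). *)
Definition psi_thm12 (R : nzRingType) (n : nat) (c2 : 'I_n) (L : nat) (k : rates R n)
  : R * R * R * seq (R * R) :=
  let: (ka, kb, kc) := k in
  (ka c2 1%N, kb c2 1%N, kc c2 1%N,
   [seq (ka c2 (L + 1 - j)%N, kb c2 (L + 1 - j)%N + kc c2 (L + 1 - j)%N)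
      | j <- iota 1 (L - 1)]).

From HB Require Import structures.
From mathcomp Require Import all_boot all_order all_algebra.
From mathcomp Require Import zify ring.
Import Order.TTheory GRing.Theory Num.Theory.
Local Open Scope ring_scope.
Set Implicit Arguments. Unset Strict Implicit. Unset Printing Implicit Defensive.

(* Proof: we compute five coefficients of the polynomials s' and s''.
   - Polynomial calculus: a coefficient is the pairing of a polynomial with an
     indicator, and pairings commute with the total derivative; in particular
     [x^m] s'' = sum_mu [x^mu] f_s * [x^m] (x^mu)', and the derivative of a
     complex x^mu is given by the product rule.
   - Mass-action field: [x^mu] f_x vanishes unless x^mu is a reactant complex,
     and is then produced by one or two reactions; (H1) makes the complexes
     of the network distinct.
   - With these, for 2 <= jp <= L (the paper's j is L + 1 - jp, and V_j is the jp-th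
     intermediate of the second component):
       [u_{V_L}] s'  = b~_L,            [y~ s] s'  = - a~_L,
       [u_{V_L}] s'' = - b~_L (b~_L + c~_L),
       [s u_{V_j}] s'' = - a~_L K~_j,   [y~ s s_j] s'' = a~_L a~_j;
     (H2) excludes contributions of the other reactions whose reactant
     contains s.  Since the rates are positive, these equalities determine the
     parameters one after the other. *)

Section PolynomialCalculus.
Variables (R : nzRingType) (S : finType).
Implicit Types (p q : mpoly R S) (m mu nu : mono S) (f : S -> mpoly R S)
  (g : mono S -> R).

(* Pairing of a polynomial with a weight on monomials; a coefficient is the
   pairing with an indicator, and the calculus below computes pairings. *)
Definition mpair p g : R := \sum_(t <- p) t.1 * g t.2.

Definition mono_add m mu : mono S := [ffun z => (m z + mu z)%N].
Definition mono_dec (i : S) m : mono S := [ffun z => if z == i then (m z).-1 else m z].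

Lemma mcoef_pair p m : mcoef p m = mpair p (fun mu => (mu == m)%:R).
Proof.
rewrite /mcoef /mpair big_mkcond /=; apply: eq_bigr => t _.
by case: eqP; rewrite ?mulr1 ?mulr0.
Qed.

Lemma eq_mpair p g1 g2 : g1 =1 g2 -> mpair p g1 = mpair p g2.
Proof. by move=> e; apply: eq_bigr => t _; rewrite e. Qed.

Lemma mpair_sumr (I : Type) (r : seq I) p (F : I -> mono S -> R) :
  mpair p (fun mu => \sum_(i <- r) F i mu) = \sum_(i <- r) mpair p (F i).
Proof. by rewrite /mpair exchange_big; apply: eq_bigr => t _; rewrite mulr_sumr. Qed.

Lemma mpair_mmul p q g :
  mpair (mmul p q) g = mpair p (fun mu => mpair q (fun nu => g (mono_add mu nu))).
Proof.
rewrite /mpair /mmul big_allpairs_dep /=; apply: eq_bigr => t _.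
by rewrite mulr_sumr; apply: eq_bigr => u _; rewrite mulrA.
Qed.

Lemma mpair_mderiv (i : S) p g :
  mpair (mderiv i p) g = mpair p (fun mu => (mu i)%:R * g (mono_dec i mu)).
Proof. by rewrite /mpair /mderiv big_map; apply: eq_bigr => t _; rewrite mulrA. Qed.

Lemma mpair_tdot f p g : mpair (tdot f p) g = \sum_(i <- enum S)
  mpair p (fun mu => (mu i)%:R * mpair (f i) (fun nu => g (mono_add (mono_dec i mu) nu))).
Proof.
rewrite /tdot /mpair big_flatten big_map; apply: eq_bigr => i _.
by rewrite -/(mpair _ _) mpair_mmul mpair_mderiv.
Qed.

Lemma sum_enum_only (x : S) (F : S -> R) :
  (forall i, i != x -> F i = 0) -> \sum_(i <- enum S) F i = F x.
Proof.
by move=> F0; rewrite (bigD1_seq x) ?mem_enum ?enum_uniq //= big1 ?addr0.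
Qed.

Lemma mono_add_dec_var (s : S) nu :
  mono_add (mono_dec s [ffun z => nat_of_bool (z == s)]) nu = nu.
Proof. by apply/ffunP => z; rewrite !ffunE; case: (z =P s) => [->|]; rewrite ?eqxx. Qed.

Lemma mpair_tdot_mvar f (s : S) g : mpair (tdot f (mvar R s)) g = mpair (f s) g.
Proof.
rewrite mpair_tdot (sum_enum_only (x := s)) => [|i /negbTE ns].
  rewrite /mpair big_cons big_nil /= ffunE eqxx !mul1r addr0.
  by apply: eq_bigr => t _; rewrite mono_add_dec_var.
by rewrite /mpair big_cons big_nil /= ffunE ns mul0r mulr0 addr0.
Qed.

Definition dmono_coef f m mu : R := \sum_(i <- enum S)
  (mu i)%:R * mpair (f i) (fun nu => (mono_add (mono_dec i mu) nu == m)%:R).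

Lemma coef_iter_dot1 f s m : mcoef (iter_dot f 1 s) m = mcoef (f s) m.
Proof. by rewrite !mcoef_pair /iter_dot /= mpair_tdot_mvar. Qed.

Lemma coef_iter_dot2 f s m : mcoef (iter_dot f 2 s) m = mpair (f s) (dmono_coef f m).
Proof.
rewrite mcoef_pair /iter_dot /= mpair_tdot.
under eq_bigr => i _ do rewrite mpair_tdot_mvar.
by rewrite -mpair_sumr.
Qed.

End PolynomialCalculus.

Section Complexes.
Variable S : finType.
Implicit Types (a b u : S) (m : mono S).

(* Complexes have degree 1 (an intermediate) or 2 (an enzyme-substrate pair). *)
Definition mono_deg m : nat := (\sum_(z : S) m z)%N.

Lemma sum_indicator u : (\sum_(z : S) nat_of_bool (z == u))%N = 1%N.
Proof. by rewrite (bigD1 u) //= eqxx big1 ?addn0 // => z /negbTE ->. Qed.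

Lemma mono_deg_cplx1 u : mono_deg (cplx1 u) = 1%N.
Proof. by rewrite /mono_deg; under eq_bigr => z _ do rewrite ffunE; exact: sum_indicator. Qed.

Lemma mono_deg_cplxYS a b : mono_deg (cplxYS a b) = 2%N.
Proof.
by rewrite /mono_deg; under eq_bigr => z _ do rewrite ffunE; rewrite big_split /= !sum_indicator.
Qed.

Lemma mono_deg_add m1 m2 : mono_deg (mono_add m1 m2) = (mono_deg m1 + mono_deg m2)%N.
Proof. by rewrite /mono_deg; under eq_bigr => z _ do rewrite ffunE; rewrite big_split. Qed.

Lemma cplxYS_neq_cplx1 a b u : cplxYS a b != cplx1 u.
Proof. by apply/eqP => e; have := mono_deg_cplxYS a b; rewrite e mono_deg_cplx1. Qed.

Lemma cplx1_neq_cplxYS u a b : cplx1 u != cplxYS a b.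
Proof. by rewrite eq_sym cplxYS_neq_cplx1. Qed.

Lemma cplx1_inj : injective (@cplx1 S).
Proof. by move=> u u' /ffunP /(_ u); rewrite !ffunE eqxx; case: (u =P u'). Qed.

Lemma cplxYS_add a b : cplxYS a b = mono_add (cplx1 a) (cplx1 b).
Proof. by apply/ffunP => z; rewrite !ffunE. Qed.

Lemma cplxYS_sym a b : cplxYS a b = cplxYS b a.
Proof. by apply/ffunP => z; rewrite !ffunE addnC. Qed.

Lemma cplxYS_eq a b a' b' : a != b ->
  cplxYS a b = cplxYS a' b' -> (a = a' /\ b = b') \/ (a = b' /\ b = a').
Proof.
move=> nab /ffunP e; have := e a; have := e b; rewrite !ffunE !eqxx.
rewrite (negbTE nab) eq_sym (negbTE nab).
case: (a =P a') => h1; case: (a =P b') => h2; case: (b =P a') => h3;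
  case: (b =P b') => h4 //= _ _; try by [left | right].
all: by exfalso; move/eqP: nab; apply; congruence.
Qed.

Lemma mono_add_swap a b u : mono_add (cplx1 a) (cplxYS b u) = mono_add (cplx1 b) (cplxYS a u).
Proof. by apply/ffunP => z; rewrite !ffunE addnCA. Qed.

Lemma cplxYS_outside a b x : x != a -> x != b -> cplxYS a b x = 0%N.
Proof. by rewrite ffunE => /negbTE -> /negbTE ->. Qed.

Lemma mono_add_inj m : injective (mono_add m).
Proof. by move=> nu nu' /ffunP e; apply/ffunP => z; have := e z; rewrite !ffunE => /addnI. Qed.

Lemma mono_dec_cplxYS a b : a != b -> mono_dec a (cplxYS a b) = cplx1 b.
Proof.
move=> nab; apply/ffunP => z; rewrite !ffunE.
by case: (z =P a) => [->|_]; rewrite ?(negbTE nab).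
Qed.

End Complexes.

Section DerivativeOfComplexes.
Variables (R : nzRingType) (S : finType) (f : S -> mpoly R S).
Implicit Types (a b u : S) (m : mono S).

(* [x^m] (x_b * f_a), the contribution of the factor x_a to (x_a x_b)'. *)
Definition coef_mulvar a b m : R :=
  mpair (f a) (fun nu => (mono_add (cplx1 b) nu == m)%:R).

Lemma dmono_coef_cplx1 m u : dmono_coef f m (cplx1 u) = mcoef (f u) m.
Proof.
rewrite /dmono_coef (sum_enum_only (x := u)) => [|i /negbTE ni].
  by rewrite ffunE eqxx mul1r mcoef_pair; apply: eq_mpair => nu; rewrite mono_add_dec_var.
by rewrite ffunE ni mul0r.
Qed.

Lemma dmono_coef_cplxYS m a b : a != b ->
  dmono_coef f m (cplxYS a b) = coef_mulvar a b m + coef_mulvar b a m.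
Proof.
move=> nab; rewrite /dmono_coef; under eq_bigr => i _ do rewrite ffunE natrD mulrDl.
rewrite big_split /= (sum_enum_only (x := a)) => [|i /negbTE ni]; last by rewrite ni mul0r.
rewrite (sum_enum_only (x := b)) => [|i /negbTE ni]; last by rewrite ni mul0r.
rewrite !eqxx !mul1r mono_dec_cplxYS // cplxYS_sym mono_dec_cplxYS //.
by rewrite eq_sym.
Qed.

Lemma coef_mulvar_shift a b m : coef_mulvar a b (mono_add (cplx1 b) m) = mcoef (f a) m.
Proof.
rewrite /coef_mulvar mcoef_pair; apply: eq_mpair => nu.
by rewrite (inj_eq (@mono_add_inj _ _)).
Qed.

Lemma coef_mulvar_zero a b m : m b = 0%N -> coef_mulvar a b m = 0.
Proof.
move=> mb; rewrite /coef_mulvar /mpair big1 // => t _.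
case: eqP => [/ffunP /(_ b)|]; last by rewrite mulr0.
by rewrite mb !ffunE eqxx.
Qed.

End DerivativeOfComplexes.

Section ReactionSums.
Variables (R : nzRingType) (n : nat) (L : 'I_n -> nat) (F : 'I_n -> nat -> R).

Lemma sum_reactions_only c0 j0 : (1 <= j0 <= L c0)%N ->
  (forall c j, (1 <= j <= L c)%N -> (c != c0) || (j != j0) -> F c j = 0) ->
  \sum_(c <- enum 'I_n) \sum_(j <- iota 1 (L c)) F c j = F c0 j0.
Proof.
move=> hj0 F0; rewrite (sum_enum_only (x := c0)) => [|c nc]; last first.
  by rewrite big1_seq // => j; rewrite mem_iota => /andP[h1 h2]; apply: F0; [lia | rewrite nc].
have j0_in : j0 \in iota 1 (L c0) by rewrite mem_iota; case/andP: hj0 => h1 h2; lia.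
rewrite (bigD1_seq j0) ?iota_uniq //=.
rewrite big1_seq ?addr0 // => j /andP[nj]; rewrite mem_iota => /andP[h1 h2].
by apply: F0; [lia | rewrite nj orbT].
Qed.

Lemma sum_reactions_zero : (forall c j, (1 <= j <= L c)%N -> F c j = 0) ->
  \sum_(c <- enum 'I_n) \sum_(j <- iota 1 (L c)) F c j = 0.
Proof.
move=> F0; rewrite big1_seq // => c _; rewrite big1_seq // => j.
by rewrite mem_iota => /andP[h1 h2]; apply: F0; lia.
Qed.

End ReactionSums.


Section NetworkStructure.
Variables (S : finType) (n : nat) (comps : 'I_n -> rcomp S).
Local Notation L c := (cL (comps c)).
Local Notation Y c := (cY (comps c)).
Local Notation Sb c i := (cS (comps c) i).
Local Notation U c j := (cU (comps c) j).
Hypothesis hH1 : H1 comps.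

Lemma length_pos c : (0 < L c)%N.
Proof. by case: hH1. Qed.

Lemma intermediate_inj c j c' j' : (1 <= j <= L c)%N -> (1 <= j' <= L c')%N ->
  U c j = U c' j' -> c = c' /\ j = j'.
Proof. by case: hH1 => _ [hU _]; apply: hU. Qed.

Lemma intermediate_neq_enzyme c j c' : (1 <= j <= L c)%N -> U c j <> Y c'.
Proof. by case: hH1 => _ [_ [hU _]] hj; case: (hU c j c' hj). Qed.

Lemma intermediate_neq_substrate c j c' i : (1 <= j <= L c)%N -> (i <= L c')%N ->
  U c j <> Sb c' i.
Proof. by case: hH1 => _ [_ [hU _]] hj; case: (hU c j c' hj) => _; apply. Qed.

Lemma enzyme_neq_substrate c i : (i <= L c)%N -> Y c <> Sb c i.
Proof. by case: hH1 => _ [_ [_ [hYS _]]]; case: (hYS c) => h _; apply: h. Qed.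

Lemma substrate_inj c i i' : (i <= L c)%N -> (i' <= L c)%N -> Sb c i = Sb c i' -> i = i'.
Proof. by case: hH1 => _ [_ [_ [hYS _]]]; case: (hYS c) => _; apply. Qed.

Lemma complex_inj c i c' i' : (i <= L c)%N -> (i' <= L c')%N ->
  cplxYS (Y c) (Sb c i) = cplxYS (Y c') (Sb c' i') -> c = c' /\ i = i'.
Proof.
move=> hi hi' e; case: (eqVneq c c') => [ec|nc]; last first.
  by case: hH1 => _ [_ [_ [_ hdisj]]]; case: (hdisj c c' i i' (elimN eqP nc) hi hi' e).
subst c'; split=> //; case/cplxYS_eq: e; first exact/eqP/enzyme_neq_substrate.
  by case=> _ /substrate_inj; apply.
by case=> e _; case: (enzyme_neq_substrate hi').
Qed.

End NetworkStructure.

Section FieldCoefficients.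
Variables (R : nzRingType) (S : finType) (n : nat) (comps : 'I_n -> rcomp S).
Variables (ka kb kc : 'I_n -> nat -> R).
Local Notation L c := (cL (comps c)).
Local Notation Y c := (cY (comps c)).
Local Notation Sb c i := (cS (comps c) i).
Local Notation U c j := (cU (comps c) j).
Local Notation f := (rhs comps (ka, kb, kc)).

Lemma mpair_rhs x (g : mono S -> R) :
  mpair (f x) g =
  \sum_(c <- enum 'I_n) \sum_(j <- iota 1 (L c))
   (ka c j * ((cplx1 (U c j) x)%:R - (cplxYS (Y c) (Sb c j.-1) x)%:R)
        * g (cplxYS (Y c) (Sb c j.-1))
  + kb c j * ((cplxYS (Y c) (Sb c j.-1) x)%:R - (cplx1 (U c j) x)%:R) * g (cplx1 (U c j))
  + kc c j * ((cplxYS (Y c) (Sb c j) x)%:R - (cplx1 (U c j) x)%:R) * g (cplx1 (U c j))).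
Proof.
rewrite /rhs /mass_action /mpair big_map /network_reactions big_flatten big_map /=.
apply: eq_bigr => c _; rewrite big_flatten big_map; apply: eq_bigr => j _.
by rewrite !big_cons big_nil /= addr0 addrA.
Qed.

Hypothesis hH1 : H1 comps.

(* Only the two reactions U_j -> Y + S_{j-1} and U_j -> Y + S_j have the
   monomial u_j as their reactant. *)
Lemma coef_rhs_intermediate x c0 j0 : (1 <= j0 <= L c0)%N ->
  mcoef (f x) (cplx1 (U c0 j0)) =
    kb c0 j0 * ((cplxYS (Y c0) (Sb c0 j0.-1) x)%:R - (cplx1 (U c0 j0) x)%:R)
  + kc c0 j0 * ((cplxYS (Y c0) (Sb c0 j0) x)%:R - (cplx1 (U c0 j0) x)%:R).
Proof.
move=> hj0; rewrite mcoef_pair mpair_rhs (sum_reactions_only hj0) /=.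
  by rewrite (negbTE (cplxYS_neq_cplx1 _ _ _)) eqxx mulr0 !mulr1 add0r.
move=> c j hj hne; rewrite (negbTE (cplxYS_neq_cplx1 _ _ _)) mulr0 add0r.
case: eqP => [/cplx1_inj /(intermediate_inj hH1 hj hj0) [ec ej]|_].
  by move: hne; rewrite ec ej !eqxx.
by rewrite !mulr0 addr0.
Qed.

(* Only the reaction Y + S_{j-1} -> U_j has the monomial y s_{j-1} as reactant. *)
Lemma coef_rhs_complex x c0 j0 : (1 <= j0 <= L c0)%N ->
  mcoef (f x) (cplxYS (Y c0) (Sb c0 j0.-1)) =
    ka c0 j0 * ((cplx1 (U c0 j0) x)%:R - (cplxYS (Y c0) (Sb c0 j0.-1) x)%:R).
Proof.
move=> hj0; rewrite mcoef_pair mpair_rhs (sum_reactions_only hj0) /=.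
  by rewrite (negbTE (cplx1_neq_cplxYS _ _ _)) eqxx !mulr0 mulr1 !addr0.
move=> c j hj hne; rewrite (negbTE (cplx1_neq_cplxYS _ _ _)) !mulr0 !addr0.
case: eqP => [e|_]; last by rewrite mulr0.
have [ec ej] : c = c0 /\ j.-1 = j0.-1.
  by apply: (complex_inj hH1) e; [case/andP: hj => h1 h2 | case/andP: hj0 => h1 h2]; lia.
move: hne; rewrite ec (_ : j = j0) ?eqxx //.
by move: hj hj0 ej; rewrite ec; lia.
Qed.

Lemma coef_rhs_other x m :
  (forall c j, (1 <= j <= L c)%N -> m <> cplx1 (U c j) /\ m <> cplxYS (Y c) (Sb c j.-1)) ->
  mcoef (f x) m = 0.
Proof.
move=> hm; rewrite mcoef_pair mpair_rhs sum_reactions_zero // => c j hj.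
have [h1 h2] := hm c j hj.
have -> : (cplx1 (U c j) == m) = false by apply/eqP => e; apply: h1.
have -> : (cplxYS (Y c) (Sb c j.-1) == m) = false by apply/eqP => e; apply: h2.
by rewrite !mulr0 !addr0.
Qed.

End FieldCoefficients.

Lemma prev_index_le j m : (1 <= j <= m)%N -> (j.-1 <= m)%N.
Proof. by case/andP=> _; apply: leq_trans (leq_pred j). Qed.

(* The two components of Theorem 12: c1 is Y + S_0 <-> U_1 -> ... -> Y + S_L
   and c2 runs backwards, Y~ + S_L <-> V_L -> Y~ + S_{L-1} ... -> Y~ + S_0,
   i.e. its i-th substrate is S_{L-i}. *)
Section Theorem12Coefficients.
Variables (R : comNzRingType) (S : finType) (n : nat) (comps : 'I_n -> rcomp S).
Variables (c1 c2 : 'I_n) (cls : S -> nat) (ka kb kc : 'I_n -> nat -> R).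
Local Notation L c := (cL (comps c)).
Local Notation Y c := (cY (comps c)).
Local Notation Sb c i := (cS (comps c) i).
Local Notation U c j := (cU (comps c) j).
Local Notation f := (rhs comps (ka, kb, kc)).

Hypothesis hH1 : H1 comps.
(* The consequence of (H2) that is used: a species class containing all
   substrates of a component but not its enzyme. *)
Hypothesis cls_substrates : forall c i i', (i <= L c)%N -> (i' <= L c)%N ->
  cls (Sb c i) = cls (Sb c i').
Hypothesis cls_enzyme : forall c i, (i <= L c)%N -> cls (Y c) <> cls (Sb c i).
Hypothesis hL2 : L c2 = L c1.
Hypothesis hS2 : forall i, (i <= L c1)%N -> Sb c2 i = Sb c1 (L c1 - i).

Local Notation s := (Sb c1 (L c1)).
Local Notation yt := (Y c2).
Local Notation v := (U c2 1).

Let L1_pos : (1 <= L c1)%N. Proof. exact: length_pos. Qed.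
Let v_index : (1 <= 1 <= L c2)%N. Proof. by rewrite /= hL2. Qed.

Lemma c2_first_substrate : Sb c2 0 = s.
Proof. by rewrite hS2 // subn0. Qed.

Lemma s_neq_c2_second_substrate : s != Sb c2 1.
Proof. by apply/eqP; rewrite hS2 // => /(substrate_inj hH1); lia. Qed.

Lemma s_neq_c2_enzyme : s != yt.
Proof.
by rewrite eq_sym -c2_first_substrate; apply/eqP/(enzyme_neq_substrate hH1).
Qed.

Lemma intermediate_at_s c j : (1 <= j <= L c)%N -> cplx1 (U c j) s = 0%N.
Proof.
move=> hj; rewrite ffunE; case: eqP => // e.
by case: (intermediate_neq_substrate hH1 hj (leqnn (L c1))).
Qed.

Lemma other_complex_neq c j : (1 <= j <= L c)%N -> (c != c2) || (j != 1%N) ->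
  cplxYS (Y c) (Sb c j.-1) <> cplxYS yt s.
Proof.
move=> hj hne e; rewrite -c2_first_substrate in e.
have [ec ej] := complex_inj hH1 (prev_index_le hj) (leq0n _) e.
by move: hne; rewrite ec eqxx (_ : j = 1%N) //; case/andP: hj => h1 h2; lia.
Qed.

(* Since all substrates of c1 share the class of s, which is never the class
   of the enzyme of the same component, a component whose enzyme (resp. one of
   whose substrates) is s has no substrate (resp. no enzyme) among those of c1. *)
Lemma enzyme_s_substrate c i i' : (i <= L c)%N -> (i' <= L c1)%N ->
  Y c = s -> Sb c i <> Sb c1 i'.
Proof.
move=> hi hi' eY eS; apply: (cls_enzyme hi).
by rewrite eY eS (cls_substrates hi' (leqnn _)).
Qed.

Lemma substrate_s_enzyme c i i' : (i <= L c)%N -> (i' <= L c1)%N ->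
  Sb c i = s -> Y c <> Sb c1 i'.
Proof.
move=> hi hi' eS eY; apply: (cls_enzyme hi).
by rewrite eS eY (cls_substrates hi' (leqnn _)).
Qed.

Lemma coef1_v : mcoef (f s) (cplx1 v) = kb c2 1.
Proof.
rewrite (coef_rhs_intermediate _ _ _ hH1 _ v_index) intermediate_at_s // c2_first_substrate !ffunE !eqxx.
rewrite (negbTE s_neq_c2_enzyme) (negbTE s_neq_c2_second_substrate) /=.
by rewrite !subr0 mulr1 mulr0 addr0.
Qed.

Lemma coef1_yt_s : mcoef (f s) (cplxYS yt s) = - ka c2 1.
Proof.
rewrite -{1 2}c2_first_substrate (coef_rhs_complex _ _ _ hH1 _ v_index) c2_first_substrate.
by rewrite intermediate_at_s // !ffunE !eqxx (negbTE s_neq_c2_enzyme) /= sub0r mulrN1.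
Qed.

Lemma dmono_coef_v_complex c i : (i <= L c)%N ->
  dmono_coef f (cplx1 v) (cplxYS (Y c) (Sb c i)) = 0.
Proof.
move=> hi; rewrite dmono_coef_cplxYS; last exact/eqP/(enzyme_neq_substrate hH1).
rewrite !coef_mulvar_zero ?addr0 // ffunE; case: eqP => // e.
  by case: (intermediate_neq_enzyme hH1 v_index (esym e)).
by case: (intermediate_neq_substrate hH1 v_index hi (esym e)).
Qed.

Lemma coef_field_v_at_intermediate c j : (1 <= j <= L c)%N ->
  mcoef (f (U c j)) (cplx1 v) = - (kb c2 1 + kc c2 1) * (U c j == v)%:R.
Proof.
move=> hj; rewrite (coef_rhs_intermediate _ _ _ hH1 _ v_index) !ffunE.
rewrite (introF eqP (intermediate_neq_enzyme hH1 hj)).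
rewrite (introF eqP (intermediate_neq_substrate hH1 hj (leq0n _))).
rewrite (introF eqP (intermediate_neq_substrate hH1 hj (_ : 1 <= L c2)%N)) //=.
by rewrite !add0n; ring.
Qed.

Lemma coef2_v : mcoef (iter_dot f 2 s) (cplx1 v) = - kb c2 1 * (kb c2 1 + kc c2 1).
Proof.
rewrite coef_iter_dot2 mpair_rhs (sum_reactions_only v_index) => [|c j hj hne].
  rewrite dmono_coef_v_complex // !dmono_coef_cplx1 coef_field_v_at_intermediate //.
  rewrite intermediate_at_s // c2_first_substrate !ffunE !eqxx (negbTE s_neq_c2_enzyme).
  rewrite (negbTE s_neq_c2_second_substrate) /=; ring.
rewrite dmono_coef_v_complex ?prev_index_le // !dmono_coef_cplx1.
rewrite coef_field_v_at_intermediate // (_ : (U c j == v) = false) ?mulr0 ?addr0 //.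
by apply/eqP => /(intermediate_inj hH1 hj v_index) [ec ej]; move: hne; rewrite ec ej !eqxx.
Qed.

(* The species b forming a complex s + b other than Y~ + S_L: it is neither s
   nor Y~, neither a substrate of c1 nor an intermediate. *)
Definition foreign_partner (b : S) : Prop :=
  [/\ b != s, b <> yt, forall i, (i <= L c1)%N -> b <> Sb c1 i
    & forall c j, (1 <= j <= L c)%N -> b <> U c j].

Lemma partner_of_s c j : (1 <= j <= L c)%N -> (c != c2) || (j != 1%N) ->
  cplxYS (Y c) (Sb c j.-1) s != 0%N ->
  exists2 b, cplxYS (Y c) (Sb c j.-1) = cplxYS s b & foreign_partner b.
Proof.
move=> hj hne; have hi := prev_index_le hj.
have not_first := other_complex_neq hj hne.
rewrite ffunE; case: (s =P Y c) => [eY|nY]; case: (s =P Sb c j.-1) => [eS|nS] //= _.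
- by case: (enzyme_neq_substrate hH1 hi); rewrite -eY -eS.
- exists (Sb c j.-1); first by rewrite -eY.
  split; [apply/eqP; exact: nesym | | move=> i hi'; exact: enzyme_s_substrate hi hi' (esym eY) | ].
  + by move=> e; apply: not_first; rewrite -eY e cplxYS_sym.
  + by move=> c' j' hj' e; apply: (intermediate_neq_substrate hH1 hj' hi).
- exists (Y c); first by rewrite -eS cplxYS_sym.
  split; [apply/eqP; exact: nesym | | move=> i hi'; exact: substrate_s_enzyme hi hi' (esym eS) | ].
  + by move=> e; apply: not_first; rewrite -eS e.
  + by move=> c' j' hj' e; apply: (intermediate_neq_enzyme hH1 hj' (esym e)).
Qed.

(* For a monomial m absent from the field, [x^m] s'' is a sum over the
   reactions whose reactant complex contains s; if the complexes s + b other
   than Y~ + s do not contribute, only the reaction (c2, 1) is left. *)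
Lemma coef2_first_reaction m : (forall x, mcoef (f x) m = 0) ->
  (forall b, foreign_partner b -> dmono_coef f m (cplxYS s b) = 0) ->
  mcoef (iter_dot f 2 s) m = - ka c2 1 * dmono_coef f m (cplxYS yt s).
Proof.
move=> m_absent partner0.
rewrite coef_iter_dot2 mpair_rhs (sum_reactions_only v_index) => [|c j hj hne].
  rewrite !dmono_coef_cplx1 !m_absent !mulr0 !addr0 intermediate_at_s //.
  by rewrite c2_first_substrate !ffunE eqxx (negbTE s_neq_c2_enzyme) /= sub0r mulrN1.
rewrite !dmono_coef_cplx1 !m_absent !mulr0 !addr0 intermediate_at_s //.
have [->|/partner_of_s] := eqVneq (cplxYS (Y c) (Sb c j.-1) s) 0%N.
  by rewrite subrr mulr0 mul0r.
by case=> // b -> /partner0 ->; rewrite mulr0.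
Qed.

(* The coefficients of s'' at s u_w and at y~ s s_z, for the reaction
   (c2, jp) : Y~ + Z -> W, i.e. jp = L + 1 - j for the paper's index j. *)
Section LaterReaction.
Variable jp : nat.
Hypothesis hjp : (2 <= jp <= L c1)%N.
Local Notation w := (U c2 jp).
Local Notation z := (Sb c2 jp.-1).
Local Notation z' := (Sb c2 jp).

Let w_index : (1 <= jp <= L c2)%N.
Proof. by rewrite hL2; case/andP: hjp => h1 h2; apply/andP; split; lia. Qed.

Lemma c2_substrate_in_c1 i : (i <= L c1)%N -> exists2 i', (i' <= L c1)%N & Sb c2 i = Sb c1 i'.
Proof. by move=> hi; exists (L c1 - i)%N; rewrite ?leq_subr ?hS2. Qed.

Lemma foreign_partner_neq_c2 b i : foreign_partner b -> (i <= L c1)%N -> b <> Sb c2 i.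
Proof. by case=> _ _ hS _ hi; case: (c2_substrate_in_c1 hi) => i' hi' ->; apply: hS. Qed.

Lemma z_neq_s : s != z.
Proof.
apply/eqP; rewrite hS2 => [/(substrate_inj hH1)|]; last by case/andP: hjp => h1 h2; lia.
by case/andP: hjp => h1 h2; lia.
Qed.

Lemma yt_neq_c2_substrate i : (i <= L c1)%N -> yt <> Sb c2 i.
Proof. by rewrite -hL2; apply: enzyme_neq_substrate. Qed.

Lemma coef_w_vanishes a : a <> yt -> a <> z -> a <> z' -> a <> w ->
  mcoef (f a) (cplx1 w) = 0.
Proof.
move=> h1 h2 h3 h4; rewrite (coef_rhs_intermediate _ _ _ hH1 _ w_index) !ffunE.
by do !(case: eqP => // _); rewrite /= subrr !mulr0 addr0.
Qed.

Lemma coef_w_at_yt : mcoef (f yt) (cplx1 w) = kb c2 jp + kc c2 jp.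
Proof.
rewrite (coef_rhs_intermediate _ _ _ hH1 _ w_index) !ffunE eqxx.
rewrite (introF eqP (yt_neq_c2_substrate (_ : jp.-1 <= L c1)%N)); last lia.
rewrite (introF eqP (yt_neq_c2_substrate (_ : jp <= L c1)%N)); last lia.
rewrite (introF eqP (nesym (intermediate_neq_enzyme hH1 w_index))) /=.
by rewrite !subr0 !mulr1.
Qed.

(* s u_w is not a complex, and [s u_w] s'' = - a~_L K~_j. *)
Lemma coef2_s_w : mcoef (iter_dot f 2 s) (cplxYS s w) = - ka c2 1 * (kb c2 jp + kc c2 jp).
Proof.
have s_neq_w : s != w.
  by apply/eqP => e; apply: (intermediate_neq_substrate hH1 w_index (leqnn (L c1))).
rewrite coef2_first_reaction => [|x|b [b_s b_yt b_c1 b_U]].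
- rewrite dmono_coef_cplxYS; last by rewrite eq_sym s_neq_c2_enzyme.
  rewrite (coef_mulvar_zero _ s) ?addr0; last first.
    apply: cplxYS_outside; first by rewrite eq_sym s_neq_c2_enzyme.
    by apply/eqP => e; apply: (intermediate_neq_enzyme hH1 w_index (esym e)).
  by rewrite cplxYS_add coef_mulvar_shift coef_w_at_yt.
- apply: coef_rhs_other => c j hj; split; first exact/eqP/cplxYS_neq_cplx1.
  case/(cplxYS_eq s_neq_w) => [] [_ e].
    exact: (intermediate_neq_substrate hH1 w_index (prev_index_le hj) e).
  exact: (intermediate_neq_enzyme hH1 w_index e).
- rewrite dmono_coef_cplxYS; last by rewrite eq_sym.
  rewrite (coef_mulvar_zero _ s); last first.
    by apply: cplxYS_outside => //; apply/eqP; exact: b_U w_index.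
  rewrite add0r cplxYS_add coef_mulvar_shift coef_w_vanishes //.
  + by apply: foreign_partner_neq_c2 => //; case/andP: hjp => h1 h2; lia.
  + by apply: foreign_partner_neq_c2 => //; case/andP: hjp.
  + exact: b_U w_index.
Qed.

(* y~ s s_z is not a complex, and [y~ s s_z] s'' = a~_L a~_j. *)
Lemma coef2_yt_s_z :
  mcoef (iter_dot f 2 s) (mono_add (cplx1 s) (cplxYS yt z)) = ka c2 1 * ka c2 jp.
Proof.
have z_index : (jp.-1 <= L c1)%N by case/andP: hjp => h1 h2; lia.
have z_c1 : z = Sb c1 (L c1 - jp.-1) by rewrite hS2.
have yt_neq_w : yt != w by apply/eqP/nesym/(intermediate_neq_enzyme hH1 w_index).
have deg3 : mono_deg (mono_add (cplx1 s) (cplxYS yt z)) = 3%N.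
  by rewrite mono_deg_add mono_deg_cplx1 mono_deg_cplxYS.
rewrite coef2_first_reaction => [|x|b [b_s b_yt b_c1 b_U]].
- rewrite dmono_coef_cplxYS; last by rewrite eq_sym s_neq_c2_enzyme.
  rewrite coef_mulvar_shift mono_add_swap coef_mulvar_shift.
  rewrite (coef_rhs_complex _ _ _ hH1 _ w_index) !ffunE eqxx (negbTE yt_neq_w).
  rewrite (introF eqP (yt_neq_c2_substrate z_index)) /=.
  rewrite coef_rhs_other => [|c j hj]; first by ring.
  split; first exact/eqP/cplxYS_neq_cplx1.
  have hi := prev_index_le hj.
  case/(cplxYS_eq z_neq_s) => [] [e1 e2].
    by apply: (enzyme_s_substrate hi (leq_subr jp.-1 _) (esym e1)); rewrite -e2.
  by apply: (substrate_s_enzyme hi (leq_subr jp.-1 _) (esym e1)); rewrite -e2.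
- apply: coef_rhs_other => c j hj; split => e.
    by have := deg3; rewrite e mono_deg_cplx1.
  by have := deg3; rewrite e mono_deg_cplxYS.
- rewrite dmono_coef_cplxYS; last by rewrite eq_sym.
  rewrite (coef_mulvar_zero _ s); last first.
    rewrite !ffunE (negbTE b_s) (introF eqP b_yt) (introF eqP (_ : b <> z)) //.
    by rewrite z_c1; apply: b_c1; rewrite leq_subr.
  rewrite add0r coef_mulvar_shift (coef_rhs_complex _ _ _ hH1 _ w_index).
  rewrite cplxYS_outside; last 2 first.
  - exact/eqP.
  - by apply/eqP; rewrite z_c1; apply: b_c1; rewrite leq_subr.
  by rewrite ffunE (introF eqP (b_U _ _ w_index)) subrr mulr0.
Qed.

End LaterReaction.

Lemma s_derivative_coefficients :
  [/\ mcoef (iter_dot f 1 s) (cplx1 v) = kb c2 1,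
      mcoef (iter_dot f 1 s) (cplxYS yt s) = - ka c2 1,
      mcoef (iter_dot f 2 s) (cplx1 v) = - kb c2 1 * (kb c2 1 + kc c2 1)
    & forall jp, (2 <= jp <= L c1)%N ->
      mcoef (iter_dot f 2 s) (cplxYS s (U c2 jp)) = - ka c2 1 * (kb c2 jp + kc c2 jp)
      /\ mcoef (iter_dot f 2 s) (mono_add (cplx1 s) (cplxYS yt (Sb c2 jp.-1)))
         = ka c2 1 * ka c2 jp].
Proof.
rewrite !coef_iter_dot1 coef1_v coef1_yt_s coef2_v.
by split=> // jp hjp; rewrite coef2_s_w ?coef2_yt_s_z.
Qed.

End Theorem12Coefficients.

Lemma H2_substrate_class (S : finType) n (comps : 'I_n -> rcomp S) :
  H1 comps -> H2 comps ->
  exists cls : S -> nat,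
    (forall c i i', (i <= cL (comps c))%N -> (i' <= cL (comps c))%N ->
       cls (cS (comps c) i) = cls (cS (comps c) i')) /\
    (forall c i, (i <= cL (comps c))%N -> cls (cY (comps c)) <> cls (cS (comps c) i)).
Proof.
move=> hH1 [M [cls [_ [_ [_ [_ hcls]]]]]]; exists cls.
have first_index c : (1 <= 1 <= cL (comps c))%N by rewrite /= length_pos.
split=> [c i i' hi hi' | c i hi].
  by have [a [_ [ha _]]] := hcls c 1%N (first_index c); rewrite !ha.
by have [a [_ [ha hY]]] := hcls c 1%N (first_index c); rewrite ha.
Qed.

Theorem mainTheorem12 (R : realFieldType) (S : finType) (n : nat)
  (comps : 'I_n -> rcomp S) (c1 c2 : 'I_n) :
  H1 comps -> H2 comps -> species_cover comps ->
  c1 != c2 ->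
  (1 <= cL (comps c1))%N ->
  cL (comps c2) = cL (comps c1) ->
  (forall i, (i <= cL (comps c1))%N -> cS (comps c2) i = cS (comps c1) (cL (comps c1) - i)) ->
  identifiable (R := R) comps (cS (comps c1) (cL (comps c1))) 2
    (psi_thm12 c2 (cL (comps c1))).
Proof.
move=> hH1 hH2 _ _ hL1 hL2 hS2 [[ka1 kb1] kc1] [[ka2 kb2] kc2] pos1 pos2 same.
have [cls [cls_S cls_Y]] := H2_substrate_class hH1 hH2.
have [A1 B1 C1 DE1] := s_derivative_coefficients ka1 kb1 kc1 hH1 cls_S cls_Y hL2 hS2.
have [A2 B2 C2 DE2] := s_derivative_coefficients ka2 kb2 kc2 hH1 cls_S cls_Y hL2 hS2.
have [ka_pos [kb_pos _]] : 0 < ka1 c2 1%N /\ 0 < kb1 c2 1%N /\ 0 < kc1 c2 1%N.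
  by apply: pos1; rewrite hL2 hL1.
have eb : kb1 c2 1%N = kb2 c2 1%N by rewrite -A1 -A2; apply: same.
have ea : ka1 c2 1%N = ka2 c2 1%N by apply: oppr_inj; rewrite -B1 -B2; apply: same.
have ec : kc1 c2 1%N = kc2 c2 1%N.
  have : - kb1 c2 1%N * (kb1 c2 1%N + kc1 c2 1%N) = - kb2 c2 1%N * (kb2 c2 1%N + kc2 c2 1%N).
    by rewrite -C1 -C2; apply: same.
  have kb_nz : - kb1 c2 1%N != 0 by rewrite oppr_eq0 lt0r_neq0.
  by rewrite -eb => /(mulfI kb_nz) /addrI.
rewrite /psi_thm12 /=; congr (_, _, _, _) => //.
apply/eq_in_map => j; rewrite mem_iota => hj.
have hjp : (2 <= cL (comps c1) + 1 - j <= cL (comps c1))%N by case/andP: hj; lia.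
have [D1 E1] := DE1 _ hjp; have [D2 E2] := DE2 _ hjp.
have ka_nz : ka1 c2 1%N != 0 by rewrite lt0r_neq0.
congr (_, _).
  by apply: (mulfI ka_nz); rewrite {2}ea -E1 -E2; apply: same.
apply: (mulfI (_ : - ka1 c2 1%N != 0)); first by rewrite oppr_eq0.
by rewrite {2}ea -D1 -D2; apply: same.
Qed.
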